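(* Let $t\in[0,1]$, $\ell\in\{1,\dots,L\}$, and $\mathbf x_t\in\mathsf X$ with $p_t(\mathbf x_t)>0$. Then for every $\mathbf y\in\mathsf X$ with $\mathbf y^{-\ell}=\mathbf x_t^{-\ell}$, $$\frac{p_t(\mathbf y)}{p_t(\mathbf x_t)}=\frac{q^\ell_{t|0}\big(\mathbf y^\ell\mid\hat{\mathbf x}^{\mathrm{loo}}_0(\mathbf x_t,t)^\ell\big)}{q^\ell_{t|0}\big(\mathbf x_t^\ell\mid\hat{\mathbf x}^{\mathrm{loo}}_0(\mathbf x_t,t)^\ell\big)}.$$
   Context: **Setup.** - Let $K\ge2$, $L\ge1$ and $\mathsf V=\{1,\dots,K\}$. Tokens are identified with the standard basis vectors of $\mathbb R^K$. - $\Delta_K$ is the probability simplex. - $\mathsf X=\mathsf V^L$. For $\mathbf x\in\mathsf X$, $\mathbf x^\ell$ is its $\ell$-th token and $\mathbf x^{-\ell}$ denotes the other tokens. - $p_0$ is a distribution on $\mathsf X$. - The noise schedule $\alpha:[0,1]\to[0,1]$ is nonincreasing with $\alpha_0=1$. - For each $\ell$ fix $\pi^\ell\in\Delta_K$. The forward token kernel is $q^\ell_{t|0}(x\mid\nu)=\langle x,\alpha_t\nu+(1-\alpha_t)\pi^\ell\rangle$, defined for $\nu\in\Delta_K$ (in particular for one-hot $\nu$). - The sequence-level kernel is the product over positions. - $X_0\sim p_0$ and $X_t\mid X_0\sim q_{t|0}(\cdot\mid X_0)$. $p_t$ is the law of $X_t$. **Leave-one-out mean.** - $\hat{\mathbf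 x}^{\mathrm{loo}}_0(\mathbf x_t,t)^\ell:=\mathbb E[X_0^\ell\mid X_t^{-\ell}=\mathbf x_t^{-\ell}]\in\Delta_K$. *)

From mathcomp Require Import all_boot all_order all_algebra.
Set Implicit Arguments. Unset Strict Implicit. Unset Printing Implicit Defensive.
Import Order.TTheory GRing.Theory Num.Theory.
Local Open Scope ring_scope.

(* Tokens: 'I_K ; sequences X = V^L : {ffun 'I_L -> 'I_K}.
   A vector of R^K is a function 'I_K -> R; <x, v> = v x. *)
Definition seqX (K L : nat) := {ffun 'I_L -> 'I_K}.

Definition onehot {R : numDomainType} {K : nat} (x : 'I_K) : 'I_K -> R :=
  fun k => (k == x)%:R.

Definition in_simplex {R : numDomainType} {K : nat} (v : 'I_K -> R) : Prop :=
  (forall k, 0 <= v k) /\ \sum_(k < K) v k = 1.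

(* q^l_{t|0}(x | nu) = < x , alpha_t nu + (1 - alpha_t) pi^l > *)
Definition qtok {R : numDomainType} {K : nat} (alpha : R -> R) (t : R)
  (pil : 'I_K -> R) (x : 'I_K) (nu : 'I_K -> R) : R :=
  alpha t * nu x + (1 - alpha t) * pil x.

Definition qseq {R : numDomainType} {K L : nat} (alpha : R -> R) (t : R)
  (pi : 'I_L -> 'I_K -> R) (x x0 : seqX K L) : R :=
  \prod_(l < L) qtok alpha t (pi l) (x l) (onehot (x0 l)).

Definition joint {R : numDomainType} {K L : nat} (p0 : seqX K L -> R)
  (alpha : R -> R) (t : R) (pi : 'I_L -> 'I_K -> R) (x0 x : seqX K L) : R :=
  p0 x0 * qseq alpha t pi x x0.

Definition pt {R : numDomainType} {K L : nat} (p0 : seqX K L -> R)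
  (alpha : R -> R) (t : R) (pi : 'I_L -> 'I_K -> R) (x : seqX K L) : R :=
  \sum_(x0 : seqX K L) joint p0 alpha t pi x0 x.

Definition agree_off {K L : nat} (l : 'I_L) (y x : seqX K L) : bool :=
  [forall m : 'I_L, (m != l) ==> (y m == x m)].

Definition loo_num {R : numDomainType} {K L : nat} (p0 : seqX K L -> R)
  (alpha : R -> R) (t : R) (pi : 'I_L -> 'I_K -> R) (x : seqX K L)
  (l : 'I_L) (k : 'I_K) : R :=
  \sum_(x0 : seqX K L | x0 l == k)
    \sum_(y : seqX K L | agree_off l y x) joint p0 alpha t pi x0 y.

Definition loo_den {R : numDomainType} {K L : nat} (p0 : seqX K L -> R)
  (alpha : R -> R) (t : R) (pi : 'I_L -> 'I_K -> R) (x : seqX K L)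
  (l : 'I_L) : R :=
  \sum_(x0 : seqX K L)
    \sum_(y : seqX K L | agree_off l y x) joint p0 alpha t pi x0 y.

(* leave-one-out mean  E[X_0^l | X_t^{-l} = x^{-l}] in Delta_K
   (as the vector of conditional probabilities of each token) *)
Definition xloo {R : numFieldType} {K L : nat} (p0 : seqX K L -> R)
  (alpha : R -> R) (t : R) (pi : 'I_L -> 'I_K -> R) (x : seqX K L)
  (l : 'I_L) : 'I_K -> R :=
  fun k => loo_num p0 alpha t pi x l k / loo_den p0 alpha t pi x l.

From mathcomp Require Import all_boot all_order all_algebra.
From mathcomp Require Import ring.
Set Implicit Arguments. Unset Strict Implicit. Unset Printing Implicit Defensive.
Import Order.TTheory GRing.Theory Num.Theory.
Local Open Scope ring_scope.

(* Freeze every token of [x_t] except the l-th. Since the forward kernel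
   factorises over positions, the joint law of [(X_0, X_t)] on that fibre is
   [c(x0) * q^l(y^l | x0^l)] with a "cavity weight" [c] not depending on
   [y^l]. Summing over [x0] and using that [q^l(. | nu)] is affine in [nu]
   gives [p_t(y) = D * q^l(y^l | c-mixture of the one-hot vectors)], where the
   mixture is the leave-one-out mean and [D = P(X_t^{-l} = x_t^{-l})] is its
   normaliser; [D] cancels in the ratio and [D >= p_t(x_t) > 0]. *)

Lemma sum_onehot {R : numDomainType} {K : nat} (x : 'I_K) :
  \sum_(k < K) (onehot x k : R) = 1.
Proof. by rewrite /onehot (bigD1 x) //= eqxx big1 ?addr0 // => k /negbTE ->. Qed.

Section TokenKernel.
Variables (R : numDomainType) (K : nat) (alpha : R -> R) (t : R)
  (pil : 'I_K -> R).

Lemma sum_qtok (nu : 'I_K -> R) :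
  \sum_(k < K) pil k = 1 -> \sum_(k < K) nu k = 1 ->
  \sum_(x < K) qtok alpha t pil x nu = 1.
Proof.
move=> pil1 nu1.
by rewrite /qtok big_split /= -!mulr_sumr pil1 nu1 !mulr1 addrC subrK.
Qed.

Lemma qtok_ge0 (x : 'I_K) (nu : 'I_K -> R) :
  0 <= alpha t <= 1 -> (forall k, 0 <= pil k) -> (forall k, 0 <= nu k) ->
  0 <= qtok alpha t pil x nu.
Proof.
move=> /andP[a_ge0 a_le1] pil_ge0 nu_ge0.
by rewrite /qtok addr_ge0 ?mulr_ge0 ?subr_ge0.
Qed.

Lemma sum_qtok_onehot (I : finType) (c : I -> R) (f : I -> 'I_K) (x : 'I_K) :
  \sum_i c i * qtok alpha t pil x (onehot (f i)) =
  alpha t * \sum_(i | f i == x) c i + (1 - alpha t) * pil x * \sum_i c i.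
Proof.
rewrite /qtok /onehot; under eq_bigr do rewrite mulrDr.
rewrite big_split /= !mulr_sumr [X in _ = X + _]big_mkcond /=.
congr (_ + _); apply: eq_bigr => i _; last by rewrite mulrC.
by rewrite eq_sym; case: (f i == x); rewrite ?mulr1 ?mulr0 // mulrC.
Qed.

End TokenKernel.

Section Fibre.
Variables (K L : nat) (l : 'I_L) (x : seqX K L).

Lemma agree_offP (y : seqX K L) :
  reflect (forall m, m != l -> y m = x m) (agree_off l y x).
Proof.
apply: (iffP forallP) => [h m ml | h m]; first exact/eqP/(implyP (h m)).
by apply/implyP => ml; rewrite h.
Qed.

Lemma agree_off_refl : agree_off l x x.
Proof. exact/agree_offP. Qed.

Lemma sum_agree_off {R : numDomainType} (F : 'I_K -> R) :
  \sum_(y : seqX K L | agree_off l y x) F (y l) = \sum_(j < K) F j.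
Proof.
pose set_l j : seqX K L := [ffun m => if m == l then j else x m].
rewrite (reindex_onto set_l (fun y : seqX K L => y l)) => [|y /agree_offP yx].
  apply: eq_big => j; rewrite ffunE eqxx ?eqxx ?andbT //.
  by apply/agree_offP => m ml; rewrite ffunE (negbTE ml).
by apply/ffunP => m; rewrite ffunE; case: eqP => [->|/eqP /yx].
Qed.

End Fibre.

Section Cavity.
Variables (R : numDomainType) (K L : nat) (p0 : seqX K L -> R)
  (alpha : R -> R) (t : R) (pi : 'I_L -> 'I_K -> R) (l : 'I_L)
  (x : seqX K L).

Definition cavity_weight (x0 : seqX K L) : R :=
  p0 x0 * \prod_(m < L | m != l) qtok alpha t (pi m) (x m) (onehot (x0 m)).

Lemma joint_agree_off (x0 y : seqX K L) : agree_off l y x ->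
  joint p0 alpha t pi x0 y =
  cavity_weight x0 * qtok alpha t (pi l) (y l) (onehot (x0 l)).
Proof.
move=> /agree_offP yx; rewrite /joint /qseq /cavity_weight (bigD1 l) //=.
under eq_bigr => m ml do rewrite yx //.
by rewrite mulrCA mulrA [RHS]mulrC mulrA.
Qed.

Lemma sum_joint_agree_off (x0 : seqX K L) : \sum_(k < K) pi l k = 1 ->
  \sum_(y | agree_off l y x) joint p0 alpha t pi x0 y = cavity_weight x0.
Proof.
move=> pil1; under eq_bigr => y /joint_agree_off -> do [].
rewrite -mulr_sumr (sum_agree_off _ _ (qtok alpha t (pi l) ^~ _)).
by rewrite sum_qtok ?sum_onehot ?mulr1.
Qed.

Lemma loo_num_cavity (k : 'I_K) : \sum_(j < K) pi l j = 1 ->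
  loo_num p0 alpha t pi x l k =
  \sum_(x0 : seqX K L | x0 l == k) cavity_weight x0.
Proof. by move=> pil1; apply: eq_bigr => x0 _; rewrite sum_joint_agree_off. Qed.

Lemma loo_den_cavity : \sum_(j < K) pi l j = 1 ->
  loo_den p0 alpha t pi x l = \sum_x0 cavity_weight x0.
Proof. by move=> pil1; apply: eq_bigr => x0 _; rewrite sum_joint_agree_off. Qed.

Lemma pt_agree_off (y : seqX K L) : agree_off l y x ->
  pt p0 alpha t pi y =
  alpha t * \sum_(x0 : seqX K L | x0 l == y l) cavity_weight x0
  + (1 - alpha t) * pi l (y l) * \sum_x0 cavity_weight x0.
Proof.
move=> yx; rewrite -(sum_qtok_onehot _ _ _ _ (fun x0 : seqX K L => x0 l)).
by apply: eq_bigr => x0 _; rewrite joint_agree_off.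
Qed.

Lemma loo_den_sum_pt :
  loo_den p0 alpha t pi x l = \sum_(y | agree_off l y x) pt p0 alpha t pi y.
Proof. exact: exchange_big. Qed.

Lemma pt_ge0 (y : seqX K L) :
  (forall x0, 0 <= p0 x0) -> 0 <= alpha t <= 1 -> (forall m k, 0 <= pi m k) ->
  0 <= pt p0 alpha t pi y.
Proof.
move=> p0_ge0 a01 pi_ge0; apply: sumr_ge0 => x0 _.
by rewrite mulr_ge0 ?prodr_ge0 // => m _; rewrite qtok_ge0.
Qed.

Lemma pt_le_loo_den :
  (forall x0, 0 <= p0 x0) -> 0 <= alpha t <= 1 -> (forall m k, 0 <= pi m k) ->
  pt p0 alpha t pi x <= loo_den p0 alpha t pi x l.
Proof.
move=> p0_ge0 a01 pi_ge0.
rewrite loo_den_sum_pt (bigD1 x) ?agree_off_refl //= lerDl.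
by apply: sumr_ge0 => y _; exact: pt_ge0.
Qed.

End Cavity.

Lemma pt_agree_off_xloo {R : numFieldType} {K L : nat} (p0 : seqX K L -> R)
  (alpha : R -> R) (t : R) (pi : 'I_L -> 'I_K -> R) (l : 'I_L)
  (x y : seqX K L) :
  \sum_(k < K) pi l k = 1 -> loo_den p0 alpha t pi x l != 0 ->
  agree_off l y x ->
  pt p0 alpha t pi y =
  loo_den p0 alpha t pi x l * qtok alpha t (pi l) (y l) (xloo p0 alpha t pi x l).
Proof.
move=> pil1 den_neq0 yx.
rewrite (pt_agree_off p0 alpha t pi yx) /qtok /xloo loo_num_cavity //.
by rewrite loo_den_cavity // in den_neq0 *; field.
Qed.

Theorem mainTheorem3 (R : realFieldType) (K L : nat)
  (hK : (2 <= K)%N) (hL : (1 <= L)%N)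
  (p0 : seqX K L -> R)
  (hp0_nonneg : forall x, 0 <= p0 x)
  (hp0_sum : \sum_(x : seqX K L) p0 x = 1)
  (alpha : R -> R)
  (halpha_range : forall s, 0 <= s <= 1 -> 0 <= alpha s <= 1)
  (halpha_mono : forall s u, 0 <= s -> s <= u -> u <= 1 -> alpha u <= alpha s)
  (halpha0 : alpha 0 = 1)
  (pi : 'I_L -> 'I_K -> R)
  (hpi : forall l, in_simplex (pi l))
  (t : R) (ht : 0 <= t <= 1)
  (l : 'I_L) (xt : seqX K L)
  (hpos : 0 < pt p0 alpha t pi xt)
  (y : seqX K L) (hy : forall m : 'I_L, m != l -> y m = xt m) :
  pt p0 alpha t pi y / pt p0 alpha t pi xt =
  qtok alpha t (pi l) (y l) (xloo p0 alpha t pi xt l)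
  / qtok alpha t (pi l) (xt l) (xloo p0 alpha t pi xt l).
Proof.
have pil1 : \sum_(k < K) pi l k = 1 by case: (hpi l).
have pi_ge0 m k : 0 <= pi m k by case: (hpi m).
have den_gt0 : 0 < loo_den p0 alpha t pi xt l.
  apply: lt_le_trans hpos _.
  exact: pt_le_loo_den hp0_nonneg (halpha_range t ht) pi_ge0.
have den_neq0 := lt0r_neq0 den_gt0.
have y_agree : agree_off l y xt by apply/agree_offP.
rewrite (pt_agree_off_xloo pil1 den_neq0 (agree_off_refl l xt)).
rewrite (pt_agree_off_xloo pil1 den_neq0 y_agree).
by rewrite -mulf_div divff // mul1r.
Qed.
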